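(* Let $\mathcal{A}$ be a finite poset, $V$ a vector space and $(\pi_a)_{a\in\mathcal{A}}$ a family of projectors of $V$ satisfying the intersection property, and set $S_a=\operatorname{im}s_a$. Then for every $a\in\mathcal{A}$ the summation map $\bigoplus_{b\le a}S_b\to\operatorname{im}\pi_a$, $(w_b)\mapsto\sum_{b\le a}w_b$, is a well-defined isomorphism, and the summation map $\bigoplus_{b\in\mathcal{A}}S_b\to V$ is injective.
   Context: $(s_a)_{a\in\mathcal{A}}$ is the unique family of endomorphisms of $V$ with $\pi_a=\sum_{b\le a}s_b$ for every $a$. Intersection property: for all $a,b\in\mathcal{A}$, $\pi_a\pi_b=\sum_{c\le a,\ c\le b}s_c$. *)

From HB Require Import structures.
From mathcomp Require Import all_boot all_order all_algebra.
Set Implicit Arguments. Unset Strict Implicit. Unset Printing Implicit Defensive.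
Import Order.TTheory GRing.Theory.

Definition in_image (T U : Type) (f : T -> U) (v : U) : Prop := exists u, f u = v.

(* The key fact is that the s_b are
   mutually orthogonal idempotents: s_a s_b = delta_{ab} s_b.  It is proved by
   well-founded induction on the finite poset, through the recursion
   s_b = pi_b - sum_{c < b} s_c, after first establishing pi_a s_b = [b <= a] s_b.
   Orthogonality gives a way to read off components: if w_b lies in S_b = im s_b
   for every b in a set P, then s_c (sum_{b in P} w_b) = [c in P] w_c.  Hence all
   summation maps out of the S_b are injective; the summation over b <= a lands in
   im pi_a since pi_a fixes each S_b (b <= a), and it is onto because
   pi_a u = sum_{b <= a} s_b u. *)

From Stdlib Require Import FunctionalExtensionality.
From HB Require Import structures.
From mathcomp Require Import all_boot all_order all_algebra.
Set Implicit Arguments. Unset Strict Implicit. Unset Printing Implicit Defensive.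
Import Order.TTheory GRing.Theory.
Local Open Scope ring_scope.

(* Well-founded induction on a finite poset: the strict order has no infinite
   descending chain, since the strict down-set of b shrinks strictly. *)
Lemma finposet_ind (disp : Order.disp_t) (A : finPOrderType disp) (P : A -> Prop) :
  (forall b, (forall c, (c < b)%O -> P c) -> P b) -> forall b, P b.
Proof.
move=> IH.
suff H n b : (#|[pred c | (c < b)%O]| <= n)%N -> P b by move=> b; exact: (H _ b).
elim: n b => [|n IHn] b Hb; apply: IH => c Hcb.
  by move: Hb; rewrite leqn0 => /eqP/card0_eq/(_ c); rewrite !inE Hcb.
apply: IHn; rewrite -ltnS; apply: leq_trans Hb; apply: proper_card.
apply/properP; split; last by exists c; rewrite !inE ?ltxx.
by apply/subsetP => x; rewrite !inE => Hxc; apply: lt_trans Hcb.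
Qed.

Lemma sum_delta (I : finType) (M : zmodType) (P : pred I) (F : I -> M) (b : I) :
  \sum_(c | P c) (if c == b then F c else 0) = if P b then F b else 0.
Proof.
rewrite -big_mkcondr; case: ifPn => Pb.
  by apply: big_pred1 => c /=; case: eqVneq => [->|]; rewrite ?Pb ?andbF.
by apply: big_pred0 => c; case: eqVneq => [->|]; rewrite ?(negPf Pb) ?andbF.
Qed.

Lemma sum_downset_top (disp : Order.disp_t) (A : finPOrderType disp)
    (M : zmodType) (P : pred A) (F : A -> M) (b : A) :
  \sum_(c | (c <= b)%O && P c) F c
    = (if P b then F b else 0) + \sum_(c | (c < b)%O && P c) F c.
Proof.
rewrite (bigID (pred1 b)) /=; congr (_ + _).
  rewrite (eq_bigl (fun c => P c && (c == b))) => [|c].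
    by rewrite big_mkcondr sum_delta.
  by case: (eqVneq c b) => [->|]; rewrite ?lexx ?andbF.
by apply: eq_bigl => c /=; rewrite lt_neqAle; case: (c == b); rewrite ?andbF /= ?andbT.
Qed.

Section OrthogonalComponents.
Variables (K : fieldType) (V : lmodType K).
Variables (disp : Order.disp_t) (A : finPOrderType disp).
Variables (pi s : A -> {linear V -> V}).
Hypothesis pi_sum : forall a v, pi a v = \sum_(b | (b <= a)%O) s b v.
Hypothesis pi_meet : forall a b v,
  pi a (pi b v) = \sum_(c | (c <= a)%O && (c <= b)%O) s c v.

Lemma s_recursion b v : s b v = pi b v - \sum_(c | (c < b)%O) s c v.
Proof.
rewrite pi_sum (bigD1 b) //= (eq_bigl (fun c => (c < b)%O)) ?addrK // => c.
by rewrite lt_neqAle andbC.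
Qed.

Lemma pi_s a b v : pi a (s b v) = if (b <= a)%O then s b v else 0.
Proof.
elim/finposet_ind: b v => b IH v.
rewrite [in LHS]s_recursion linearB linear_sum /= pi_meet.
under eq_bigr => c /IH -> do [].
rewrite -big_mkcondr (eq_bigl (fun c => (c <= b)%O && (c <= a)%O)) => [|c].
  by rewrite sum_downset_top addrK.
by rewrite andbC.
Qed.

Lemma s_orthogonal a b v : s a (s b v) = if a == b then s b v else 0.
Proof.
elim/finposet_ind: a v => a IH v.
rewrite [in LHS]s_recursion pi_s.
under eq_bigr => c /IH -> do [].
rewrite sum_delta; have [->|nab] := eqVneq a b; first by rewrite lexx ltxx subr0.
by rewrite le_eqVlt eq_sym (negPf nab) /=; case: ifP; rewrite ?subrr ?subr0.
Qed.

Lemma s_component (P : pred A) (w : A -> V) :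
  (forall b, P b -> in_image (s b) (w b)) ->
  forall c, s c (\sum_(b | P b) w b) = if P c then w c else 0.
Proof.
move=> Hw c; rewrite linear_sum /= -(sum_delta P w c).
apply: eq_bigr => b /Hw [u <-].
by rewrite s_orthogonal eq_sym; case: eqVneq => [->|].
Qed.

Lemma sum_components_inj (P : pred A) (w w' : A -> V) :
  (forall b, P b -> in_image (s b) (w b)) ->
  (forall b, P b -> in_image (s b) (w' b)) ->
  \sum_(b | P b) w b = \sum_(b | P b) w' b -> forall b, P b -> w b = w' b.
Proof.
move=> Hw Hw' E b Pb.
by have := s_component Hw b; rewrite E (s_component Hw') Pb.
Qed.

Lemma pi_fixes a b x : (b <= a)%O -> in_image (s b) x -> pi a x = x.
Proof. by move=> ba [u <-]; rewrite pi_s ba. Qed.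

End OrthogonalComponents.

Theorem mainTheorem8 (K : fieldType) (V : lmodType K)
  (disp : Order.disp_t) (A : finPOrderType disp)
  (pi s : A -> {linear V -> V})
  (* each pi a is a projector *)
  (Hproj : forall a v, pi a (pi a v) = pi a v)
  (* s is the (unique) family with pi_a = sum_{b <= a} s_b *)
  (Hs : forall a v, pi a v = \sum_(b | (b <= a)%O) s b v)
  (* intersection property *)
  (Hint : forall a b v,
      pi a (pi b v) = \sum_(c | (c <= a)%O && (c <= b)%O) s c v) :
  (forall a : A,
     (* well-defined: the summation lands in im pi_a *)
     (forall w : A -> V, (forall b, (b <= a)%O -> in_image (s b) (w b)) ->
        in_image (pi a) (\sum_(b | (b <= a)%O) w b))
     (* injective *)
  /\ (forall w w' : A -> V,
        (forall b, (b <= a)%O -> in_image (s b) (w b)) ->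
        (forall b, (b <= a)%O -> in_image (s b) (w' b)) ->
        \sum_(b | (b <= a)%O) w b = \sum_(b | (b <= a)%O) w' b ->
        forall b, (b <= a)%O -> w b = w' b)
     (* surjective onto im pi_a *)
  /\ (forall v, in_image (pi a) v ->
        exists w : A -> V, (forall b, (b <= a)%O -> in_image (s b) (w b)) /\
          \sum_(b | (b <= a)%O) w b = v))
  /\
  (* the total summation map is injective *)
  (forall w w' : A -> V,
     (forall b, in_image (s b) (w b)) -> (forall b, in_image (s b) (w' b)) ->
     \sum_b w b = \sum_b w' b -> w = w').
Proof.
split=> [a|w w' Hw Hw' E]; last first.
  apply: functional_extensionality => b.
  have HwT c : predT c -> in_image (s c) (w c) by move=> _; exact: Hw.
  have Hw'T c : predT c -> in_image (s c) (w' c) by move=> _; exact: Hw'.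
  exact: (sum_components_inj Hs Hint HwT Hw'T E).
split; [|split].
- move=> w Hw; exists (\sum_(b | (b <= a)%O) w b).
  by rewrite linear_sum; apply: eq_bigr => b ba; apply: (pi_fixes Hs Hint ba (Hw b ba)).
- exact: sum_components_inj Hs Hint _.
- move=> v [u <-]; exists (fun b => s b u); split; last by rewrite Hs.
  by move=> b _; exists u.
Qed.
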